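(* Let $\theta>1$, $t>0$, let $G:\mathbb R\to\mathbb R$ be bounded, and let $\{\mu_N\}$ be any sequence of probability measures on $\Omega_N$. Then $$\limsup_{N\to\infty}\mathbb E_{\mu_N}\Big[\Big|\int_0^tN^{1-\theta}\sum_{x\in\Lambda_N}G(\tfrac xN)r_N^-(\tfrac xN)(\eta_x(sN^2)-\alpha)\,ds\Big|\Big]=0,$$ $$\limsup_{N\to\infty}\mathbb E_{\mu_N}\Big[\Big|\int_0^tN^{1-\theta}\sum_{x\in\Lambda_N}G(\tfrac xN)r_N^+(\tfrac xN)(\eta_x(sN^2)-\beta)\,ds\Big|\Big]=0.$$
   Context: Fix $\gamma>2$, $p(0)=0$, $p(z)=c_\gamma|z|^{-\gamma-1}$ ($z\ne0$) with $c_\gamma$ normalizing; $\alpha,\beta\in(0,1)$, $\kappa>0$. $\Lambda_N=\{1,\dots,N-1\}$, $\Omega_N=\{0,1\}^{\Lambda_N}$; $\sigma^{x,y}\eta$ exchanges $\eta_x,\eta_y$; $\sigma^x\eta$ flips $\eta_x$; $c_x(\eta;a)=\eta_x(1-a)+(1-\eta_x)a$. $L_N=L_N^0+L_N^\ell+L_N^r$, $(L_N^0f)(\eta)=\frac12\sum_{x,y\in\Lambda_N}p(x-y)[f(\sigma^{x,y}\eta)-f(\eta)]$, $(L_N^\ell f)(\eta)=\frac{\kappa}{N^\theta}\sum_{x\in\Lambda_N,y\le0}p(x-y)c_x(\eta;\alpha)[f(\sigma^x\eta)-f(\eta)]$, $(L_N^rf)(\eta)=\frac{\kappa}{N^\theta}\sum_{x\in\Lambda_N,y\ge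 N}p(x-y)c_x(\eta;\beta)[f(\sigma^x\eta)-f(\eta)]$. $(\eta(t))_{t\ge0}$ is the Markov process on $\Omega_N$ with generator $L_N$ and initial law $\mu_N$; $\mathbb E_{\mu_N}$ is the corresponding expectation. $r_N^-(\frac xN)=\sum_{y\ge x}p(y)$, $r_N^+(\frac xN)=\sum_{y\le x-N}p(y)$. *)

From HB Require Import structures.
From mathcomp Require Import all_boot all_order all_algebra.
From mathcomp Require Import all_classical all_reals all_analysis.
Set Implicit Arguments. Unset Strict Implicit. Unset Printing Implicit Defensive.
Import Order.TTheory GRing.Theory Num.Theory.
Import numFieldNormedType.Exports.
Local Open Scope classical_set_scope.
Local Open Scope ring_scope.

Section Model.
Variable R : realType.

Definition rseries (u : nat -> R) : R := limn (fun n => \sum_(k < n) u k).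

(* c_gamma : normalizing constant, so that sum_{z <> 0} p(z) = 1 *)
Definition cgamma (gamma : R) : R :=
  (rseries (fun k => 2 * ((k.+1)%:R `^ (- gamma - 1))))^-1.

Definition pker (gamma : R) (z : int) : R :=
  if z == 0 then 0 else cgamma gamma * ((`|z|%:R : R) `^ (- gamma - 1)).

(* Omega_N = {0,1}^{Lambda_N}, Lambda_N = {1,...,N-1}; site x = i+1 for i : 'I_(N.-1) *)
Definition config (N : nat) := {ffun 'I_(N.-1) -> bool}.
Definition site (N : nat) (i : 'I_(N.-1)) : int := (i.+1)%:Z.

Definition exch N (x y : 'I_(N.-1)) (eta : config N) : config N :=
  [ffun z => if z == x then eta y else if z == y then eta x else eta z].
Definition flip N (x : 'I_(N.-1)) (eta : config N) : config N :=
  [ffun z => if z == x then ~~ eta x else eta z].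

Definition cx N (eta : config N) (x : 'I_(N.-1)) (a : R) : R :=
  (eta x)%:R * (1 - a) + (1 - (eta x)%:R) * a.

(* generator L_N = L_N^0 + L_N^l + L_N^r acting on functions f : Omega_N -> R *)
Definition gen (gamma alpha beta kappa theta : R) (N : nat)
  (f : config N -> R) (eta : config N) : R :=
  2^-1 * (\sum_(x : 'I_(N.-1)) \sum_(y : 'I_(N.-1))
            pker gamma (site x - site y) * (f (exch x y eta) - f eta))
  + kappa / (N%:R `^ theta) * \sum_(x : 'I_(N.-1))
      rseries (fun k => (* y = -k <= 0 *)
        pker gamma (site x - (- (k%:Z))) * cx eta x alpha * (f (flip x eta) - f eta))
  + kappa / (N%:R `^ theta) * \sum_(x : 'I_(N.-1))
      rseries (fun k => (* y = N + k >= N *)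
        pker gamma (site x - (N%:Z + k%:Z)) * cx eta x beta * (f (flip x eta) - f eta)).

Definition semigroup gamma alpha beta kappa theta N (t : R)
  (f : config N -> R) (a : config N) : R :=
  rseries (fun k => t ^+ k / (k`!)%:R *
                    iter k (gen gamma alpha beta kappa theta (N:=N)) f a).

Definition trans gamma alpha beta kappa theta N (t : R) (a b : config N) : R :=
  semigroup gamma alpha beta kappa theta t (fun c => (c == b)%:R) a.

(* finite-dimensional distributions of the chain started from law mu, for a
   list of (time, state) pairs with nondecreasing nonnegative times *)
Fixpoint chain_prob gamma alpha beta kappa theta N (a : config N) (t : R)
  (s : seq (R * config N)) : R :=
  match s with
  | [::] => 1
  | (t', a') :: s' => trans gamma alpha beta kappa theta (t' - t) a a' *
                      chain_prob gamma alpha beta kappa theta a' t' s'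
  end.

Definition fdd_prob gamma alpha beta kappa theta N (mu : config N -> R)
  (s : seq (R * config N)) : R :=
  match s with
  | [::] => 1
  | (t0, a0) :: s' =>
      (\sum_(b : config N) mu b * trans gamma alpha beta kappa theta t0 b a0) *
      chain_prob gamma alpha beta kappa theta a0 t0 s'
  end.

Definition is_prob_on N (mu : config N -> R) : Prop :=
  (forall a, 0 <= mu a) /\ \sum_(a : config N) mu a = 1.

(* eta : T -> R -> Omega_N is (a cadlag version of) the Markov process with
   generator L_N and initial law mu under P *)
Definition is_markov_process gamma alpha beta kappa theta N
  (mu : config N -> R) (d : measure_display) (T : measurableType d)
  (P : probability T R) (eta : T -> R -> config N) : Prop :=
  (forall t a, 0 <= t -> measurable [set w | eta w t = a])
  /\ (forall w t, 0 <= t -> exists2 delta : R, 0 < delta &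
        forall s, t <= s < t + delta -> eta w s = eta w t)
  /\ (forall s : seq (R * config N),
        all (fun p => 0 <= p.1) s -> sorted (fun p q => p.1 <= q.1) s ->
        P [set w | all (fun p => eta w p.1 == p.2) s] =
        (fdd_prob gamma alpha beta kappa theta mu s)%:E).

(* r_N^-(x/N) = sum_{y >= x} p(y),  r_N^+(x/N) = sum_{y <= x - N} p(y) *)
Definition rminus gamma (x : int) : R := rseries (fun k => pker gamma (x + k%:Z)).
Definition rplus gamma (N : nat) (x : int) : R :=
  rseries (fun k => pker gamma (x - N%:Z - k%:Z)).

End Model.

From HB Require Import structures.
From mathcomp Require Import all_boot all_order all_algebra.
From mathcomp Require Import all_classical all_reals all_analysis.
From mathcomp Require Import ring lra zify.
Import Order.TTheory GRing.Theory Num.Theory.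
Import numFieldNormedType.Exports.
Local Open Scope classical_set_scope.
Local Open Scope ring_scope.

(* The estimate holds path by path, so neither the dynamics nor the initial
   law enter the proof. Since eta_x is 0 or 1 and |G| <= M, the integrand is
   at most N^(1-theta) * M * sum_x r_N^(+/-)(x/N) in absolute value. For
   gamma > 2, p(z) <= c_gamma |z|^-3, and sum_{k>=0} (x+k)^-3 is at most
   3/(x(x+1)) by telescoping, so sum_x r_N^(+/-)(x/N) <= 3 c_gamma uniformly
   in N. The expectation is thus O(N^(1-theta) t), which vanishes because
   theta > 1. *)

Section TailSums.
Variable R : realType.

Definition inv_pronic (n : nat) : R := (n%:R * n.+1%:R)^-1.

Lemma inv_pronic_ge0 n : 0 <= inv_pronic n.
Proof. by rewrite invr_ge0 mulr_ge0. Qed.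

Lemma natrVn3_le_inv_pronicB n : (0 < n)%N ->
  n%:R ^- 3 <= 3 * (inv_pronic n - inv_pronic n.+1).
Proof.
move=> n0; rewrite /inv_pronic.
set z : R := n%:R; have z1 : 1 <= z by rewrite ler1n.
have -> : n.+1%:R = z + 1 by rewrite -natr1.
have -> : n.+2%:R = z + 2 by rewrite -addn2 natrD.
have -> : 3 * ((z * (z + 1))^-1 - ((z + 1) * (z + 2))^-1)
          = 6 / (z * (z + 1) * (z + 2)) by field; lra.
have z0 : 0 < z by lra.
have zzz0 : 0 < z * (z + 1) * (z + 2) by rewrite !mulr_gt0 // ?addr_gt0.
rewrite ler_pdivlMr // mulrC ler_pdivrMr ?exprn_gt0 // !exprS expr0 mulr1; nra.
Qed.

Lemma sum_natrVn3_le m n : (0 < m)%N ->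
  \sum_(k < n) (m + k)%:R ^- 3 <= 3 * inv_pronic m.
Proof.
move=> m0; suff: \sum_(k < n) (m + k)%:R ^- 3
                  <= 3 * (inv_pronic m - inv_pronic (m + n)) :> R.
  by move/le_trans; apply; rewrite ler_pM2l // gerBl inv_pronic_ge0.
elim: n => [|n IH]; first by rewrite big_ord0 addn0 subrr mulr0.
have mn0 : (0 < m + n)%N by rewrite addn_gt0 m0.
rewrite big_ord_recr addnS /=.
apply: le_trans (lerD IH (natrVn3_le_inv_pronicB _ mn0)) _.
by rewrite -mulrDr addrA subrK.
Qed.

Lemma sum_inv_pronic_le1 n : \sum_(i < n) inv_pronic i.+1 <= 1.
Proof.
suff -> : \sum_(i < n) inv_pronic i.+1 = 1 - n.+1%:R^-1.
  by rewrite gerBl invr_ge0.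
elim: n => [|n IH]; first by rewrite big_ord0 invr1 subrr.
rewrite big_ord_recr /= IH /inv_pronic.
have z0 : 0 < n.+1%:R :> R by rewrite ltr0n.
have -> : n.+2%:R = n.+1%:R + 1 :> R by rewrite -natr1.
by field; lra.
Qed.

End TailSums.

Section BoundaryRates.
Variable R : realType.

(* [rseries] is a [limn], so this also proves that the series converges. *)
Lemma norm_rseries_le (u a : nat -> R) (c B : R) :
  (forall k, u k = c * a k) -> (forall k, 0 <= a k) ->
  (forall n, \sum_(k < n) a k <= B) -> `|rseries u| <= `|c| * B.
Proof.
move=> ua a0 aB; pose S n := \sum_(k < n) a k.
have S_nd : nondecreasing_seq S.
  by apply/nondecreasing_seqP => n; rewrite /S big_ord_recr /= lerDl.
have S_cvg : cvgn S.
  by apply: nondecreasing_is_cvgn => //; exists B => _ [n _ <-]; exact: aB.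
have -> : rseries u = c * limn S.
  apply: cvg_lim => //; under eq_fun do under eq_bigr do rewrite ua.
  under eq_fun do rewrite -mulr_sumr; exact: cvgMl_tmp.
have S_ge0 : 0 <= limn S by apply: limr_ge => //; near=> n; exact: sumr_ge0.
rewrite normrM ler_wpM2l // ger0_norm //.
by apply: limr_le => //; near=> n; exact: aB.
Unshelve. all: by end_near. Qed.

Lemma pker_absz (gamma : R) (z : int) : z != 0 ->
  pker gamma z = cgamma gamma * `|z|%N%:R `^ (- gamma - 1).
Proof. by rewrite /pker => /negPf ->. Qed.

Lemma powR_le_natrVn3 (gamma : R) n : 2 < gamma -> (0 < n)%N ->
  n%:R `^ (- gamma - 1) <= n%:R ^- 3.
Proof.
move=> gamma2 n0; rewrite -powR_invn //; apply: ler_powR; first by rewrite ler1n.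
by rewrite -natr1; lra.
Qed.

Lemma norm_rseries_pker_le (gamma : R) m (f : nat -> int) :
  2 < gamma -> (0 < m)%N -> (forall k, `|f k|%N = (m + k)%N) ->
  `|rseries (fun k => pker gamma (f k))| <= `|cgamma gamma| * (3 * inv_pronic R m).
Proof.
move=> gamma2 m0 fk.
have mk0 k : (0 < m + k)%N by rewrite addn_gt0 m0.
apply: (@norm_rseries_le _ (fun k => (m + k)%:R `^ (- gamma - 1))).
- move=> k; rewrite pker_absz ?fk // -absz_gt0 fk; exact: mk0.
- by move=> k; exact: powR_ge0.
- move=> n; apply: le_trans (@sum_natrVn3_le R m n m0).
  by apply: ler_sum => k _; exact: powR_le_natrVn3.
Qed.

Lemma sum_norm_rminus_le (gamma : R) N : 2 < gamma ->
  \sum_(i : 'I_N.-1) `|rminus gamma (site i)| <= `|cgamma gamma| * 3.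
Proof.
move=> gamma2.
apply: (le_trans (y := \sum_(i : 'I_N.-1) `|cgamma gamma| * 3 * inv_pronic R i.+1)).
  by apply: ler_sum => i _; rewrite -mulrA; apply: norm_rseries_pker_le.
rewrite -mulr_sumr ler_piMr ?mulr_ge0 //; exact: sum_inv_pronic_le1.
Qed.

Lemma sum_norm_rplus_le (gamma : R) N : 2 < gamma ->
  \sum_(i : 'I_N.-1) `|rplus gamma N (site i)| <= `|cgamma gamma| * 3.
Proof.
move=> gamma2.
apply: (le_trans (y := \sum_(i : 'I_N.-1) `|cgamma gamma| * 3 * inv_pronic R (N - i.+1))).
  apply: ler_sum => i _; have := ltn_ord i; rewrite -mulrA => iN.
  by apply: norm_rseries_pker_le => [||k]; rewrite ?/site; lia.
rewrite -mulr_sumr ler_piMr ?mulr_ge0 //.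
rewrite (reindex_inj rev_ord_inj) /=.
rewrite (eq_bigr (fun j : 'I_N.-1 => inv_pronic R j.+1)); first exact: sum_inv_pronic_le1.
by move=> j _; congr inv_pronic; have := ltn_ord j; lia.
Qed.

End BoundaryRates.

Lemma natr_powR_cvg0 (R : realType) (e : R) : e < 0 ->
  (fun N : nat => N%:R `^ e) @ \oo --> 0.
Proof.
move=> e0; apply/cvgr0Pnorm_lt => eps eps0.
pose m := expR (ln eps / e).
exists (Num.truncn m).+1 => // N /= mN.
have {mN} mN : m < N%:R by apply: lt_le_trans (truncnS_gt m) _; rewrite ler_nat.
have N0 : 0 < N%:R :> R by apply: lt_trans mN; exact: expR_gt0.
rewrite /powR gt_eqF // gtr0_norm ?expR_gt0 // -[ltRHS](lnK eps0) ltr_expR.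
have -> : ln eps = e * (ln eps / e) by field; rewrite lt_eqF.
by rewrite ltr_nM2l // -[ln eps / e]expRK ltr_ln // posrE expR_gt0.
Qed.

Lemma limn_esup_squeeze0 (R : realType) (u : nat -> \bar R) (v : nat -> R) :
  (forall n, (0 <= u n <= (v n)%:E)%E) -> v @ \oo --> 0 -> limn_esup u = 0%E.
Proof.
move=> uv v0; apply: (cvg_limn_einf_sup _).2.
apply: (@squeeze_cvge _ _ _ _ (cst 0%E) _ (fun n => (v n)%:E)).
- by apply: nearW => n; exact: uv.
- exact: cvg_cst.
- by apply: cvg_EFin v0; exact: nearW.
Qed.

Section IntegralBounds.
Context d (T : measurableType d) (R : realType) (mu : {measure set T -> \bar R}).
Local Open Scope ereal_scope.

(* No measurability is needed: a nonnegative integral is a supremum over the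
   simple functions below the integrand. *)
Lemma ge0_le_integral_nomeas D (f g : T -> \bar R) :
  (forall x, D x -> 0 <= f x) -> (forall x, D x -> f x <= g x) ->
  \int[mu]_(x in D) f x <= \int[mu]_(x in D) g x.
Proof.
move=> f0 fg.
have g0 x : D x -> 0 <= g x by move=> Dx; exact: le_trans (f0 x Dx) (fg x Dx).
rewrite (ge0_integralE mu f0) (ge0_integralE mu g0).
apply: ereal_sup_le => _ [h hf <-]; exists h => //= x.
apply: le_trans (hf x) _; rewrite /patch; case: ifP => // /set_mem Dx.
exact: fg.
Qed.

Lemma ge0_integral_le_cst D (f : T -> \bar R) (c : R) : measurable D ->
  (forall x, D x -> 0 <= f x) -> (forall x, D x -> f x <= c%:E) ->
  \int[mu]_(x in D) f x <= c%:E * mu D.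
Proof. by move=> mD f0 fc; rewrite -integral_cst //; exact: ge0_le_integral_nomeas. Qed.

Lemma abse_integral_le_bound D (f : T -> R) (c m : R) :
  measurable D -> mu D = m%:E -> (forall x, D x -> `|f x| <= c)%R ->
  `|\int[mu]_(x in D) (f x)%:E| <= (c * m)%:E.
Proof.
move=> mD muD fc.
have part_le (g : T -> \bar R) : (forall x, 0 <= g x) ->
    (forall x, D x -> g x <= c%:E) -> 0 <= \int[mu]_(x in D) g x <= (c * m)%:E.
  move=> g0 gc; rewrite integral_ge0 //= EFinM -muD.
  exact: ge0_integral_le_cst.
have c0 x : D x -> (0 <= c)%R by move/fc; exact: le_trans.
set F := fun x => (f x)%:E.
have Fpos_le x : D x -> F^\+ x <= c%:E.
  move=> Dx; rewrite funeposE ge_max !lee_fin (c0 x Dx) andbT.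
  exact: ler_normlW (fc x Dx).
have Fneg_le x : D x -> F^\- x <= c%:E.
  move=> Dx; rewrite funenegE ge_max -EFinN !lee_fin (c0 x Dx) andbT.
  by rewrite lerNl; exact: lerNnormlW (fc x Dx).
have /andP[p0 pc] := part_le _ (funepos_ge0 F) Fpos_le.
have /andP[q0 qc] := part_le _ (funeneg_ge0 F) Fneg_le.
rewrite integralE; move: p0 pc q0 qc.
case: (\int[mu]_(x in D) F^\+ x) => [p| |] //; case: (\int[mu]_(x in D) F^\- x) => [q| |] //.
by rewrite !lee_fin => p0 pc q0 qc; rewrite ler_norml; apply/andP; split; lra.
Qed.

End IntegralBounds.

Lemma norm_sum_occupation_le (R : realType) n (g r : 'I_n -> R) (b : 'I_n -> bool)
    (a M : R) : 0 <= a <= 1 -> (forall x, `|g x| <= M) ->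
  `|\sum_x g x * r x * ((b x)%:R - a)| <= M * \sum_x `|r x|.
Proof.
move=> /andP[a0 a1] gM; apply: le_trans (ler_norm_sum _ _ _) _.
rewrite mulr_sumr; apply: ler_sum => x _.
rewrite !normrM -[leRHS]mulr1 ler_pM ?mulr_ge0 ?ler_wpM2r //.
by case: (b x); rewrite ?sub0r ?normrN ger0_norm ?subr_ge0 ?gerBl.
Qed.

Lemma boundary_term_cvg0 (R : realType) (theta t a K M : R) (G : R -> R)
    (d : measure_display) (T : nat -> measurableType d)
    (P : forall N, probability (T N) R) (eta : forall N, T N -> R -> config N)
    (r : forall N, 'I_(N.-1) -> R) :
  1 < theta -> 0 < t -> 0 <= a <= 1 -> (forall u, `|G u| <= M) ->
  (forall N, \sum_(x : 'I_(N.-1)) `|r N x| <= K) ->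
  limn_esup (fun N => (\int[P N]_w (
     `| \int[lebesgue_measure]_(s in `[0%R, t])
          ((N%:R `^ (1 - theta)) * \sum_(x : 'I_(N.-1))
             G ((site x)%:~R / N%:R) * r N x *
             ((eta N w (s * N%:R ^+ 2) x)%:R - a))%:E |))%E) = 0%E.
Proof.
move=> theta1 t0 a01 GM rK.
have M0 : 0 <= M := le_trans (normr_ge0 _) (GM 0).
pose A N := N%:R `^ (1 - theta) * (M * K).
have integrand_le N w s : `|N%:R `^ (1 - theta) * \sum_(x : 'I_(N.-1))
    G ((site x)%:~R / N%:R) * r N x * ((eta N w (s * N%:R ^+ 2) x)%:R - a)| <= A N.
  rewrite normrM ger0_norm ?powR_ge0 // ler_wpM2l ?powR_ge0 //.
  apply: le_trans (@norm_sum_occupation_le _ _ _ _ _ _ _ a01 (fun x => GM _)) _.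
  by rewrite ler_wpM2l // rK.
have itv_t : lebesgue_measure `[0, t] = t%:E.
  by rewrite lebesgue_measure_itv /= lte_fin t0 oppr0 adde0.
apply: (@limn_esup_squeeze0 _ _ (fun N => A N * t)) => [N|].
  rewrite integral_ge0 //= -[leRHS]mule1 -(probability_setT (P N)).
  apply: ge0_integral_le_cst => // w _.
  exact: abse_integral_le_bound itv_t (fun s _ => integrand_le N w s).
rewrite -(mul0r (M * K * t)).
under eq_fun do rewrite /A -mulrA.
by apply: cvgMr_tmp; apply: natr_powR_cvg0; lra.
Qed.

Theorem lemma5p6 (R : realType) (gamma alpha beta kappa theta t : R)
  (G : R -> R) (d : measure_display) (T : nat -> measurableType d)
  (P : forall N, probability (T N) R)
  (mu : forall N, config N -> R) (eta : forall N, T N -> R -> config N) :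
  2 < gamma -> 0 < alpha < 1 -> 0 < beta < 1 -> 0 < kappa ->
  1 < theta -> 0 < t ->
  (exists M : R, forall u, `|G u| <= M) ->
  (forall N, is_prob_on (mu N)) ->
  (forall N, is_markov_process gamma alpha beta kappa theta (mu N) (P N) (eta N)) ->
  (limn_esup (fun N => (\int[P N]_w (
     `| \int[lebesgue_measure]_(s in `[0%R, t])
          ((N%:R `^ (1 - theta)) * \sum_(x : 'I_(N.-1))
             G ((site x)%:~R / N%:R) * rminus gamma (site x) *
             ((eta N w (s * N%:R ^+ 2) x)%:R - alpha))%:E |))%E) = 0%E)
  /\
  (limn_esup (fun N => (\int[P N]_w (
     `| \int[lebesgue_measure]_(s in `[0%R, t])
          ((N%:R `^ (1 - theta)) * \sum_(x : 'I_(N.-1))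
             G ((site x)%:~R / N%:R) * rplus gamma N (site x) *
             ((eta N w (s * N%:R ^+ 2) x)%:R - beta))%:E |))%E) = 0%E).
Proof.
move=> gamma2 /andP[alpha0 alpha1] /andP[beta0 beta1] _ theta1 t0 [M GM] _ _.
split; apply: boundary_term_cvg0 theta1 t0 _ GM _.
- by rewrite !ltW.
- by move=> N; exact: sum_norm_rminus_le.
- by rewrite !ltW.
- by move=> N; exact: sum_norm_rplus_le.
Qed.
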